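(* Let $R\subseteq\mathbb{R}^2$ be open and let $f:R\to\mathbb{R}^2$ be $C^1$. Let $V$ be a connected component of $\mathbb{R}^2\setminus(f(S)\cup C(f))$ and let $N_0=\mathrm{Val}(f,V)$. Let $w_0\in\partial V\setminus\overline{f(S)}$. Then $\mathrm{Val}(f,w_0)\le N_0$.
   Context: Write $f=(u,v)$; $J_f=u_xv_y-u_yv_x$ and $S=\{z\in R: J_f(z)=0\}$. $C(f)$ is the set of finite points $\zeta\in\mathbb{R}^2$ for which there is a sequence $(z_n)\subset R$ converging to a point of $\partial R$ or with $|z_n|\to\infty$, such that $f(z_n)\to\zeta$. $\mathrm{Val}(f,w)$ is the number (possibly infinite) of distinct $z\in R$ with $f(z)=w$, and for a set $V$, $\mathrm{Val}(f,V)=\sup_{w\in V}\mathrm{Val}(f,w)$. *)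

From HB Require Import structures.
From mathcomp Require Import all_boot all_order all_algebra.
From mathcomp Require Import all_classical all_reals all_analysis.
Set Implicit Arguments. Unset Strict Implicit. Unset Printing Implicit Defensive.
Import Order.TTheory GRing.Theory Num.Theory.
Import numFieldNormedType.Exports.
Local Open Scope classical_set_scope.
Local Open Scope ring_scope.

Section Defs.
Variable R : realType.
Local Notation P := (R * R)%type.

Definition ex : P := (1, 0).
Definition ey : P := (0, 1).

Definition u_ (f : P -> P) := fun z => (f z).1.
Definition v_ (f : P -> P) := fun z => (f z).2.

Definition C1_on (D : set P) (f : P -> P) :=
  forall z, D z ->
    [/\ derivable (u_ f) z ex, derivable (u_ f) z ey,
        derivable (v_ f) z ex, derivable (v_ f) z ey
      & [/\ {for z, continuous (fun w => derive (u_ f) w ex)},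
            {for z, continuous (fun w => derive (u_ f) w ey)},
            {for z, continuous (fun w => derive (v_ f) w ex)} &
            {for z, continuous (fun w => derive (v_ f) w ey)}]].

Definition jac (f : P -> P) (z : P) : R :=
  derive (u_ f) z ex * derive (v_ f) z ey - derive (u_ f) z ey * derive (v_ f) z ex.

Definition crit (D : set P) (f : P -> P) : set P := [set z | D z /\ jac f z = 0].

Definition bdry (A : set P) : set P := closure A `\` interior A.

Definition clusterC (D : set P) (f : P -> P) : set P :=
  [set zeta | exists zn : nat -> P,
     (forall n, D (zn n)) /\
     ((exists p, bdry D p /\ zn @ \oo --> p) \/
      ((fun n => `|zn n|) @ \oo --> +oo)) /\
     (f \o zn) @ \oo --> zeta].

(* Val(f,w): number (in N u {+oo}) of distinct z in D with f z = w,
   defined as the supremum of the sizes of finite duplicate-free lists of such z *)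
Definition Val (D : set P) (f : P -> P) (w : P) : \bar R :=
  ereal_sup [set ((size s)%:R)%:E | s in
     [set s : seq P | uniq s /\ (forall z, z \in s -> D z /\ f z = w)]].

Definition ValS (D : set P) (f : P -> P) (V : set P) : \bar R :=
  ereal_sup [set Val D f w | w in V].

End Defs.

(* Every preimage z of w0 is a regular point of f, because w0 avoids the
   closure of f(S).  Near a regular point f is locally onto: for y close to
   f z, the simplified Newton map p |-> p - Df(z)^-1 (f p - y) contracts a small
   closed ball around z, and its fixed point solves f p = y (Banach).  Finitely
   many distinct preimages of w0 have pairwise disjoint neighbourhoods, so every
   w close enough to w0 has at least as many preimages; as w0 lies in the
   closure of V, such a w can be taken in V. *)

From HB Require Import structures.
From mathcomp Require Import all_boot all_order all_algebra.
From mathcomp Require Import all_classical all_reals all_analysis.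
From mathcomp Require Import ring lra.
Set Implicit Arguments. Unset Strict Implicit. Unset Printing Implicit Defensive.
Import Order.TTheory GRing.Theory Num.Theory.
Import numFieldNormedType.Exports.
Local Open Scope classical_set_scope.
Local Open Scope ring_scope.
HB.saturate prod.

(* Banach's fixed point theorem is used on R * R, and the library has no
   completeness instance for products. *)
Section prod_complete.
Context {K : numFieldType} {U V : completeNormedModType K}.

Lemma prod_cauchy_cvg (F : set_system (U * V)) :
  ProperFilter F -> cauchy F -> cvg F.
Proof.
move=> FF /cauchy_ballP Fc.
have cvg1 : cvg (fst @ F).
  apply: cauchy_cvg; apply/cauchy_ballP => e e0; rewrite near_map2.
  by apply: filterS (Fc e e0) => -[? ?] [].
have cvg2 : cvg (snd @ F).
  apply: cauchy_cvg; apply/cauchy_ballP => e e0; rewrite near_map2.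
  by apply: filterS (Fc e e0) => -[? ?] [].
apply/cvg_ex; exists (lim (fst @ F), lim (snd @ F)) => A nA.
have : F [set x | A (x.1, x.2)] by exact: (cvg_pair cvg1 cvg2).
by apply: filterS => -[].
Qed.

HB.instance Definition _ := Uniform_isComplete.Build (U * V)%type prod_cauchy_cvg.
End prod_complete.
HB.saturate prod.

Section locally_onto.
Context {T U : topologicalType}.
Hypothesis hT : hausdorff_space T.

Lemma nbhs_sep_seq (z : T) (s : seq T) : z \notin s ->
  exists A B : set T, [/\ nbhs z A, {in s, forall x, nbhs x B} & A `&` B = set0].
Proof.
elim: s => [|x s IH].
  by exists setT, set0; split; rewrite ?setI0 //; apply: filterT.
rewrite in_cons negb_or => /andP[zx /IH[A [B [zA sB AB0]]]].
move: hT; rewrite open_hausdorff => /(_ z x zx)[[A' B'] /= []].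
rewrite !inE => zA' xB' [oA' oB' /eqP A'B'0].
exists (A `&` A'), (B `|` B'); split.
- by apply: filterI => //; exact: open_nbhs_nbhs.
- move=> y; rewrite in_cons => /orP[/eqP->|ys].
    by apply: filterS (open_nbhs_nbhs (conj oB' xB')) => ? ?; right.
  by apply: filterS (sB y ys) => ? ?; left.
- rewrite -subset0 => y [[Ay A'y] [By|B'y]]; first by rewrite -AB0.
  by move/eqP: A'B'0 <-.
Qed.

Definition locally_onto (D : set T) (f : T -> U) (z : T) :=
  forall A, nbhs z A -> nbhs (f z) (f @` (D `&` A)).

Lemma near_uniq_preimages (D : set T) (f : T -> U) (w0 : U) (s : seq T) :
  uniq s -> {in s, forall z, f z = w0 /\ locally_onto D f z} ->
  \forall w \near w0, exists s' : seq T,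
    [/\ size s' = size s, uniq s' & {in s', forall z, D z /\ f z = w}].
Proof.
move=> us sreg.
(* Strengthen the induction: the new preimages also lie in a common
   neighbourhood B of s, which keeps them distinct from the one added last. *)
suff: forall B, {in s, forall z, nbhs z B} -> \forall w \near w0, exists s' : seq T,
    [/\ size s' = size s, uniq s' & {in s', forall z, [/\ D z, f z = w & B z]}].
  move=> /(_ setT (fun z _ => filterT)); apply: filterS => w [s' [ss us' s'w]].
  by exists s'; split=> // z /s'w[].
elim: s us sreg => [|z s IH] /= us sreg B sB.
  by apply: nearW => w; exists [::].
move: us => /andP[zs us].
have [A [B' [zA sB' AB'0]]] := nbhs_sep_seq zs.
have [fz zopen] := sreg z (mem_head _ _).
have s_sub : {subset s <= z :: s} by move=> x xs; rewrite in_cons xs orbT.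
have near_s : \forall w \near w0, exists s' : seq T, [/\ size s' = size s,
    uniq s' & {in s', forall x, [/\ D x, f x = w & (B `&` B') x]}].
  apply: IH => // x xs; first exact: sreg (s_sub x xs).
  exact: filterI (sB x (s_sub x xs)) (sB' x xs).
have near_z : \forall w \near w0, (f @` (D `&` (A `&` B))) w.
  by rewrite -fz; apply: zopen; apply: filterI zA (sB z (mem_head _ _)).
apply: filterS (filterI near_s near_z) => w.
move=> [[s' [ss us' s'w]] [z' [Dz' [Az' Bz']] fz']].
exists (z' :: s'); split=> /=.
- by rewrite ss.
- rewrite us' andbT; apply/negP => /s'w[_ _ [_ B'z']].
  by have : (A `&` B') z' by []; rewrite AB'0.
- by move=> x; rewrite in_cons => /orP[/eqP->|/s'w[? ? []]].
Qed.
End locally_onto.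

Section newton.
Variables (R : realType) (X : completeNormedModType R).

Lemma onto_of_near_identity (F T : X -> X) (z0 y : X) (rho M : R) : 0 < rho ->
  injective T -> {morph T : p q / p - q} -> (forall q, `|T q| <= M * `|q|) ->
  (forall p q, `|p - z0| <= rho -> `|q - z0| <= rho ->
     `|T (F p - F q) - (p - q)| <= 2^-1 * `|p - q|) ->
  M * `|F z0 - y| <= rho / 2 -> exists2 p, `|p - z0| <= rho & F p = y.
Proof.
move=> rho0 Tinj TB Tle Fnear Fz0.
(* a contraction of the closed ball whose fixed points solve F p = y *)
pose g z := z - T (F z - y).
have gB p q : g p - g q = (p - q) - T (F p - F q).
  have -> : F p - F q = (F p - y) - (F q - y) by rewrite opprB addrA subrK.
  rewrite (TB (F p - y)) /g !opprB addrACA [in RHS]addrACA.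
  by rewrite [X in _ = _ + X]addrC.
have gLip p q : `|p - z0| <= rho -> `|q - z0| <= rho ->
    `|g p - g q| <= 2^-1 * `|p - q|.
  by move=> pz qz; rewrite gB distrC Fnear.
have gz0 : `|g z0 - z0| <= rho / 2.
  by rewrite /g addrAC subrr add0r normrN (le_trans (Tle _)) // distrC.
have ballE z : closed_ball z0 rho z <-> `|z - z0| <= rho.
  by rewrite closed_ballE //= distrC.
have gball : {homo g : z / closed_ball z0 rho z >-> closed_ball z0 rho z}.
  move=> z /ballE zz0; apply/ballE.
  have z0z0 : `|z0 - z0| <= rho by rewrite subrr normr0 ltW.
  have := gLip _ _ zz0 z0z0; have := ler_normD (g z - g z0) (g z0 - z0).
  by rewrite addrA subrK; lra.
have [h gh] := Pfun gball.
have hcontr : is_contraction h.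
  exists (2^-1)%:nng; split=> [/=|[p q] [/ballE pz /ballE qz]]; first lra.
  by rewrite -gh; exact: gLip.
have [p /ballE pz hp] : exists2 p, closed_ball z0 rho p & p = h p.
  apply: banach_fixed_point hcontr (@closed_ball_closed _ _ z0 rho) _.
  by exists z0; apply/ballE; rewrite subrr normr0 ltW.
exists p => //; apply/eqP; rewrite -subr_eq0; apply/eqP/Tinj.
have T0 : T 0 = 0 by have := TB 0 0; rewrite subr0 subrr.
by rewrite T0 -(subKr p (T _)) -[p - T _]/(g p) gh -hp subrr.
Qed.
End newton.

Section mean_value.
Variable R : realType.

Lemma ltr_dist_between (p d x y t : R) : `|x - p| < d -> `|y - p| < d ->
  x <= t <= y -> `|t - p| < d.
Proof.
by rewrite !ltr_norml => /andP[? ?] /andP[? ?] /andP[? ?]; apply/andP; lra.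
Qed.

Lemma mvt_le_ball (g dg : R -> R) (p d c e x y : R) :
  (forall t, `|t - p| < d -> is_derive t 1 g (dg t)) ->
  (forall t, `|t - p| < d -> `|dg t - c| <= e) ->
  `|x - p| < d -> `|y - p| < d -> `|g y - g x - c * (y - x)| <= e * `|y - x|.
Proof.
move=> gdg dgc; wlog xy : x y / x <= y.
  move=> wlog_xy xp yp; have [xy|yx] := leP x y; first exact: wlog_xy.
  have -> : g y - g x - c * (y - x) = - (g x - g y - c * (x - y)) by ring.
  by rewrite normrN [`|y - x|]distrC wlog_xy // ltW.
move=> xp yp; have tp t : x <= t <= y -> `|t - p| < d by exact: ltr_dist_between.
have [t + ->] : exists2 t, t \in `[x, y] & g y - g x = dg t * (y - x).
  apply: MVT_segment => // [t|].
    by rewrite in_itv /= => /andP[xt ty]; apply/gdg/tp; rewrite !ltW.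
  by apply: derivable_within_continuous => t; rewrite in_itv /= => /tp /gdg [].
rewrite in_itv /= -mulrBl normrM => /tp /dgc; apply: ler_wpM2r.
by rewrite normr_ge0.
Qed.
End mean_value.

Section directional.
Variables (R : realType) (V : normedModType R).

Lemma is_derive_along (u : V -> R) (p v : V) (t : R) :
  derivable u (p + t *: v) v ->
  is_derive t 1 (fun s => u (p + s *: v)) (derive u (p + t *: v) v).
Proof.
have quotE : (fun h : R =>
      h^-1 *: ((fun s => u (p + s *: v)) (h *: 1 + t) - u (p + t *: v))) =
    (fun h : R => h^-1 *: (u (h *: v + (p + t *: v)) - u (p + t *: v))).
  by apply/funext => h; rewrite /= -[h%:A]/(h * 1) mulr1 scalerDl addrCA.
by move=> du; apply: DeriveDef; rewrite /derivable /derive /= quotE.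
Qed.
End directional.

Section plane.
Variable R : realType.
Local Notation P := (R * R)%type.

Lemma is_derive_partial_x (u : P -> R) (s y : R) : derivable u (s, y) (ex R) ->
  is_derive s 1 (fun t => u (t, y)) (derive u (s, y) (ex R)).
Proof.
have lineE t : (t, y) = (0, y) + t *: ex R.
  by congr pair; rewrite /= ?scaler0 ?addr0 // add0r -[t%:A]/(t * 1) mulr1.
have -> : (fun t => u (t, y)) = (fun t => u ((0, y) + t *: ex R)).
  by apply/funext => t; rewrite -lineE.
rewrite lineE; exact: is_derive_along.
Qed.

Lemma is_derive_partial_y (u : P -> R) (x s : R) : derivable u (x, s) (ey R) ->
  is_derive s 1 (fun t => u (x, t)) (derive u (x, s) (ey R)).
Proof.
have lineE t : (x, t) = (x, 0) + t *: ey R.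
  by congr pair; rewrite /= ?scaler0 ?addr0 // add0r -[t%:A]/(t * 1) mulr1.
have -> : (fun t => u (x, t)) = (fun t => u ((x, 0) + t *: ey R)).
  by apply/funext => t; rewrite -lineE.
rewrite lineE; exact: is_derive_along.
Qed.

Lemma lt_prod_norm (p : P) (d : R) : (`|p| < d) = (`|p.1| < d) && (`|p.2| < d).
Proof. by rewrite prod_normE gt_max. Qed.

Lemma le_prod_norm1 (p : P) : `|p.1| <= `|p|.
Proof. by rewrite prod_normE le_max lexx. Qed.

Lemma le_prod_norm2 (p : P) : `|p.2| <= `|p|.
Proof. by rewrite prod_normE le_max lexx orbT. Qed.

Lemma partials_strict_approx (D : set P) (u : P -> R) (z0 : P) (e : R) :
  open D -> D z0 -> 0 < e ->
  (forall z, D z -> derivable u z (ex R) /\ derivable u z (ey R)) ->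
  {for z0, continuous (fun z => derive u z (ex R))} ->
  {for z0, continuous (fun z => derive u z (ey R))} ->
  exists2 d, 0 < d & (forall p, `|p - z0| < d -> D p) /\
    forall p q, `|p - z0| < d -> `|q - z0| < d ->
    `|u q - u p - (derive u z0 (ex R) * (q - p).1 +
                    derive u z0 (ey R) * (q - p).2)| <= e * `|q - p|.
Proof.
move=> oD Dz0 e0 du ux_cont uy_cont.
set ux := derive u z0 (ex R); set uy := derive u z0 (ey R).
have e20 : 0 < e / 2 by rewrite divr_gt0.
have near_z0 : \forall z \near z0, [/\ D z,
    `|ux - derive u z (ex R)| <= e / 2 & `|uy - derive u z (ey R)| <= e / 2].
  move/cvgrPdist_le: ux_cont => /(_ _ e20) ux_near.
  move/cvgrPdist_le: uy_cont => /(_ _ e20) uy_near.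
  apply: filterS (filterI (open_nbhs_nbhs (conj oD Dz0)) (filterI ux_near uy_near)).
  by move=> z [? []].
have [d d0 dsub] := (nbhs_normP _ _).1 near_z0.
have near_dz t s : `|t - z0.1| < d -> `|s - z0.2| < d -> [/\ D (t, s),
    `|derive u (t, s) (ex R) - ux| <= e / 2 & `|derive u (t, s) (ey R) - uy| <= e / 2].
  move=> td sd; have /dsub[Dts uxts uyts] : `|z0 - (t, s)| < d.
    by rewrite distrC lt_prod_norm td.
  by split; [exact: Dts|rewrite distrC; exact: uxts|rewrite distrC; exact: uyts].
exists d => //; split.
  case=> t s; rewrite lt_prod_norm => /andP[td sd].
  by have [] := near_dz t s td sd.
case=> [p1 p2] [q1 q2]; rewrite !lt_prod_norm => /andP[p1d p2d] /andP[q1d q2d].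
have horiz : `|u (q1, q2) - u (p1, q2) - ux * (q1 - p1)| <= e / 2 * `|q1 - p1|.
  apply: (@mvt_le_ball _ (fun t => u (t, q2))
    (fun t => derive u (t, q2) (ex R)) _ _ _ _ _ _ _ _ p1d q1d) => t td.
    by have [Dt _ _] := near_dz t q2 td q2d; apply/is_derive_partial_x/(du _ Dt).1.
  by have [_ ? _] := near_dz t q2 td q2d.
have vert : `|u (p1, q2) - u (p1, p2) - uy * (q2 - p2)| <= e / 2 * `|q2 - p2|.
  apply: (@mvt_le_ball _ (fun t => u (p1, t))
    (fun t => derive u (p1, t) (ey R)) _ _ _ _ _ _ _ _ p2d q2d) => t td.
    by have [Dt _ _] := near_dz p1 t p1d td; apply/is_derive_partial_y/(du _ Dt).2.
  by have [_ _ ?] := near_dz p1 t p1d td.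
have -> : u (q1, q2) - u (p1, p2) - (ux * (q1 - p1) + uy * (q2 - p2)) =
    (u (q1, q2) - u (p1, q2) - ux * (q1 - p1)) +
    (u (p1, q2) - u (p1, p2) - uy * (q2 - p2)).
  by ring.
apply: le_trans (ler_normD _ _) _; apply: le_trans (lerD horiz vert) _.
rewrite [X in _ <= X * _](splitr e) mulrDl lerD // ler_wpM2l ?(ltW e20) //.
  exact: (le_prod_norm1 ((q1, q2) - (p1, p2))).
exact: (le_prod_norm2 ((q1, q2) - (p1, p2))).
Qed.

Definition lin2 (a b c d : R) (h : P) : P := (a * h.1 + b * h.2, c * h.1 + d * h.2).

Definition lin2_inv (a b c d : R) : P -> P :=
  let J := a * d - b * c in lin2 (d / J) (- b / J) (- c / J) (a / J).

Lemma lin2B (a b c d : R) : {morph lin2 a b c d : p q / p - q}.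
Proof. by move=> [p1 p2] [q1 q2]; congr pair => /=; ring. Qed.

Lemma lin2_norm (a b c d : R) (h : P) :
  `|lin2 a b c d h| <= (`|a| + `|b| + `|c| + `|d|) * `|h|.
Proof.
rewrite [`|lin2 _ _ _ _ _|]prod_normE ge_max /=.
have le_h (k : R) : `|k| * `|h.1| <= `|k| * `|h| /\ `|k| * `|h.2| <= `|k| * `|h|.
  by split; apply: ler_wpM2l; rewrite ?le_prod_norm1 ?le_prod_norm2.
have [a1 a2] := le_h a; have [b1 b2] := le_h b; have [c1 c2] := le_h c.
have [d1 d2] := le_h d; have hh := normr_ge0 h.
have := mulr_ge0 (normr_ge0 a) hh; have := mulr_ge0 (normr_ge0 b) hh.
have := mulr_ge0 (normr_ge0 c) hh; have := mulr_ge0 (normr_ge0 d) hh.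
have := ler_normD (a * h.1) (b * h.2); have := ler_normD (c * h.1) (d * h.2).
rewrite !normrM => *; apply/andP; split; lra.
Qed.

Lemma lin2K (a b c d : R) : a * d - b * c != 0 ->
  cancel (lin2 a b c d) (lin2_inv a b c d).
Proof. by move=> J0 [h1 h2]; congr pair; rewrite /= /lin2 /=; field. Qed.

Lemma lin2_invK (a b c d : R) : a * d - b * c != 0 ->
  cancel (lin2_inv a b c d) (lin2 a b c d).
Proof. by move=> J0 [h1 h2]; congr pair; rewrite /= /lin2 /=; field. Qed.

Definition jac_lin (f : P -> P) (z : P) : P -> P :=
  lin2 (derive (u_ f) z (ex R)) (derive (u_ f) z (ey R))
       (derive (v_ f) z (ex R)) (derive (v_ f) z (ey R)).

Lemma C1_strict_approx (D : set P) (f : P -> P) (z0 : P) (e : R) :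
  open D -> C1_on D f -> D z0 -> 0 < e ->
  exists2 d, 0 < d & (forall p, `|p - z0| < d -> D p) /\
    forall p q, `|p - z0| < d -> `|q - z0| < d ->
    `|f q - f p - jac_lin f z0 (q - p)| <= e * `|q - p|.
Proof.
move=> oD C1 Dz0 e0.
have [_ _ _ _ [ux_cont uy_cont vx_cont vy_cont]] := C1 z0 Dz0.
have [du du0 [Ddu u_approx]] := partials_strict_approx oD Dz0 e0
  (fun z Dz => let: And5 ux uy _ _ _ := C1 z Dz in conj ux uy) ux_cont uy_cont.
have [dv dv0 [_ v_approx]] := partials_strict_approx oD Dz0 e0
  (fun z Dz => let: And5 _ _ vx vy _ := C1 z Dz in conj vx vy) vx_cont vy_cont.
exists (Num.min du dv); first by rewrite lt_min du0 dv0.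
have lt_d x : `|x - z0| < Num.min du dv -> `|x - z0| < du /\ `|x - z0| < dv.
  by rewrite lt_min => /andP.
split=> [p /lt_d[/Ddu]//|p q /lt_d[pu pv] /lt_d[qu qv]].
rewrite [`|_ - jac_lin _ _ _|]prod_normE ge_max; apply/andP; split.
  exact: u_approx.
exact: v_approx.
Qed.

Lemma C1_locally_onto (D : set P) (f : P -> P) (z0 : P) :
  open D -> C1_on D f -> D z0 -> jac f z0 != 0 -> locally_onto D f z0.
Proof.
move=> oD C1 Dz0 J0 A /(nbhs_normP _ _).1[e e0 eA].
set a := derive (u_ f) z0 (ex R); set b := derive (u_ f) z0 (ey R).
set c := derive (v_ f) z0 (ex R); set d := derive (v_ f) z0 (ey R).
set J := jac f z0 in J0.
pose T := lin2_inv a b c d.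
pose M := `|d / J| + `|- b / J| + `|- c / J| + `|a / J|.
have M0 : 0 <= M by rewrite !addr_ge0.
pose eps := (2 * (M + 1))^-1.
have eps0 : 0 < eps by rewrite invr_gt0; lra.
have Meps : M * eps <= 2^-1 by rewrite ler_pdivrMr; lra.
have [r r0 [Dr f_approx]] := C1_strict_approx oD C1 Dz0 eps0.
pose rho := Num.min r e / 2.
have m0 : 0 < Num.min r e by rewrite lt_min r0 e0.
have rho0 : 0 < rho by rewrite divr_gt0.
have [rho_r rho_e] : rho < r /\ rho < e.
  have mr : Num.min r e <= r by rewrite ge_min lexx.
  have me : Num.min r e <= e by rewrite ge_min lexx orbT.
  by rewrite /rho; split; lra.
have Fnear p q : `|p - z0| <= rho -> `|q - z0| <= rho ->
    `|T (f p - f q) - (p - q)| <= 2^-1 * `|p - q|.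
  move=> pz qz; rewrite -[in X in T _ - X](lin2K J0 (p - q)) -lin2B.
  apply: le_trans (lin2_norm _ _ _ _ _) _; rewrite -/M.
  have := f_approx q p (le_lt_trans qz rho_r) (le_lt_trans pz rho_r).
  move/(ler_wpM2l M0)/le_trans; apply; rewrite mulrA.
  by apply: ler_wpM2r; [exact: normr_ge0|exact: Meps].
apply/(nbhs_normP _ (f @` (D `&` A))).2.
exists (rho * eps) => [|y fz0y]; first exact: mulr_gt0.
have Fz0 : M * `|f z0 - y| <= rho / 2.
  apply: le_trans (ler_wpM2l M0 (ltW fz0y)) _.
  by rewrite mulrCA ler_wpM2l ?(ltW rho0).
have [p pz fpy] := onto_of_near_identity rho0 (can_inj (lin2_invK J0))
  (@lin2B _ _ _ _) (lin2_norm _ _ _ _) Fnear Fz0.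
exists p => //; split; first exact/Dr/(le_lt_trans pz rho_r).
by apply: eA; have : `|z0 - p| < e by rewrite distrC (le_lt_trans pz rho_e).
Qed.

Lemma Val_le_ValS_closure (D : set P) (f : P -> P) (V : set P) (w0 : P) :
  closure V w0 -> (forall z, D z -> f z = w0 -> locally_onto D f z) ->
  (Val D f w0 <= ValS D f V)%E.
Proof.
move=> clVw0 onto; apply: ge_ereal_sup => _ [s [us sw0] <-].
have sreg : {in s, forall z, f z = w0 /\ locally_onto D f z}.
  by move=> z /sw0[Dz fz]; split; last exact: onto.
have [w [Vw [s' [ss us' s'w]]]] :=
  clVw0 _ (near_uniq_preimages (@norm_hausdorff _ _) us sreg).
apply: (@le_trans _ _ (Val D f w)); last by apply: ereal_sup_ubound; exists w.
by apply: ereal_sup_ubound; exists s'; rewrite ?ss.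
Qed.

End plane.

Theorem theorem3p7 (R : realType) (D : set (R * R)) (f : R * R -> R * R)
  (V : set (R * R)) (w0 : R * R) :
  open D ->
  C1_on D f ->
  (exists x, (~` (f @` crit D f `|` clusterC D f)) x /\
     V = connected_component (~` (f @` crit D f `|` clusterC D f)) x) ->
  bdry V w0 ->
  ~ closure (f @` crit D f) w0 ->
  (Val D f w0 <= ValS D f V)%E.
Proof.
move=> oD C1 _ [clVw0 _] w0_regular.
apply: Val_le_ValS_closure clVw0 _ => z Dz fz.
apply: C1_locally_onto => //; apply/eqP => Jz.
by apply: w0_regular; apply: subset_closure; exists z.
Qed.
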